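(* Fix $X\in\mathcal{E}$ and let $I$ be the (extended) Daniell integral associated with $X$. Let $f\in C(\mathbb{R})$ be a positive continuous function with bounded support. Then $f\in\mathbb{L}^\uparrow$ and $I(f)=f\circ X\in\mathcal{E}_+$.
   Context: Let $\mathcal{E}$ be an order complete vector lattice with a weak order unit $E$, $K$ its Stone space (extremally disconnected compact Hausdorff), and $C^\infty(K)$ the vector lattice of continuous functions $K\to[-\infty,\infty]$ finite off a nowhere dense set (identified when equal off a nowhere dense set), which is the universal completion $\mathcal{E}^u$. Fix a Maeda–Ogasawara representation of $\mathcal{E}$ as an order dense ideal of $C^\infty(K)$ with $E$ corresponding to $\mathbf{1}$. The sup-completion is $\mathcal{E}^s=\{f\in C(K,[-\infty,\infty]): f\ge g\text{ for some } g\in\mathcal{E}\}$. For $Y\in\mathcal{E}$, $P_Y$ denotes the band projection onto the band generated by $Y$. For a continuous $f:\mathbb{R}\to\mathbb{R}$ and $X\in C^\infty(K)$, $f\circ X$ denotes the unique element of $C^\infty(K)$ that agrees with $\omega\mapsto f(X(\omega))$ on the open dense set where $X$ is finite. Daniell calculus: $F(\mathbb{R})$ is the algebra of finite disjoint unions of intervals $(a,b]$, $(a,\infty)$, $(-\infty,b]$ ($a,b\in\mathbb{R}$), and $\mathbb{L}$ is the vector lattice of functions $f=\sum_{i=1}^n a_i\mathbf{1}_{S_i}$ with $a_i\in\mathbb{R}$ and $(S_i)$ a partition of $\mathbb{R}$ into sets of $F(\mathbb{R})$. For fixed $X\in\mathcal{E}$ the spectral system is $A_t=E-P_{(X-tE)^+}E$,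 with $A_\infty=\sup_tA_t$, $A_{-\infty}=\inf_tA_t$; the measure $\mu_A$ is $\mu_A(a,b]=A_b-A_a$, $\mu_A(a,\infty)=A_\infty-A_a$, $\mu_A(-\infty,b]=A_b-A_{-\infty}$, extended additively; the Daniell integral associated with $X$ is $I(f)=\sum_i a_i\mu_A(S_i)$ for $f=\sum_ia_i\mathbf{1}_{S_i}\in\mathbb{L}$. $\mathbb{L}^\uparrow$ is the set of $f:\mathbb{R}\to\overline{\mathbb{R}}$ for which there is a sequence $(f_n)\subseteq\mathbb{L}$ with $f_n(t)\uparrow f(t)$ for every $t$, and for such $f$, $I(f)=\sup_nI(f_n)\in\mathcal{E}^s$ (this is independent of the chosen sequence). *)

From mathcomp Require Import all_boot all_order all_algebra.
From mathcomp Require Import all_classical all_reals all_analysis.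
Set Implicit Arguments. Unset Strict Implicit. Unset Printing Implicit Defensive.
Import Order.TTheory GRing.Theory Num.Theory.
Import numFieldTopology.Exports numFieldNormedType.Exports.
Local Open Scope classical_set_scope.
Local Open Scope ring_scope.
Local Open Scope ereal_scope.

Definition extremally_disconnected (K : topologicalType) : Prop :=
  forall U : set K, open U -> open (closure U).

Definition nowhere_dense (K : topologicalType) (S : set K) : Prop :=
  (closure S)° = set0.

(** * C^oo(K): continuous K -> [-oo,+oo], finite off a nowhere dense set.
    (Two continuous functions equal off a nowhere dense set are equal,
    so no quotient is needed.) *)
Definition Cinf (R : realType) (K : topologicalType) : set (K -> \bar R) :=
  [set h | continuous h /\ nowhere_dense [set w | h w = +oo \/ h w = -oo]].

Definition is_sum (R : realType) (K : topologicalType) (h f g : K -> \bar R) : Prop :=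
  forall w, f w \is a fin_num -> g w \is a fin_num -> h w = f w + g w.

Definition order_dense_ideal_with_unit (R : realType) (K : topologicalType)
    (E : set (K -> \bar R)) : Prop :=
  E `<=` @Cinf R K /\ E (fun _ => 1) /\
  [/\ (forall f g, E f -> E g -> exists h, E h /\ is_sum h f g),
      (forall (c : R) f, E f -> E (fun w => c%:E * f w)),
      (forall f g, E f -> @Cinf R K g -> (forall w, `|g w| <= `|f w|) -> E g)
    & (forall g, @Cinf R K g -> (forall w, 0 <= g w) -> (exists w, g w != 0) ->
        exists f, E f /\ (forall w, 0 <= f w <= g w) /\ exists w, f w != 0)].

Definition disj (R : realType) (K : topologicalType) (u v : K -> \bar R) : Prop :=
  forall w, Order.min `|u w| `|v w| = 0.

(** u = P_Y 1: u lies in the band {Y}^dd generated by Y and 1 - u in {Y}^d. *)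
Definition is_bproj_unit (R : realType) (K : topologicalType)
    (E : set (K -> \bar R)) (Y u : K -> \bar R) : Prop :=
  [/\ E u,
      (forall z, E z -> disj z Y -> disj u z),
      E (fun w => 1 - u w)
    & disj (fun w => 1 - u w) Y].

Definition bproj_unit (R : realType) (K : topologicalType)
    (E : set (K -> \bar R)) (Y : K -> \bar R) : K -> \bar R :=
  xget (fun _ => 0) (is_bproj_unit E Y).

Definition is_lub_in (R : realType) (K : topologicalType)
    (S A : set (K -> \bar R)) (u : K -> \bar R) : Prop :=
  [/\ S u, (forall a, A a -> forall w, a w <= u w)
   & (forall v, S v -> (forall a, A a -> forall w, a w <= v w) -> forall w, u w <= v w)].

Definition is_glb_in (R : realType) (K : topologicalType)
    (S A : set (K -> \bar R)) (u : K -> \bar R) : Prop :=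
  [/\ S u, (forall a, A a -> forall w, u w <= a w)
   & (forall v, S v -> (forall a, A a -> forall w, v w <= a w) -> forall w, v w <= u w)].

Definition spec (R : realType) (K : topologicalType) (E : set (K -> \bar R))
    (X : K -> \bar R) (t : R) : K -> \bar R :=
  fun w => 1 - bproj_unit E (fun w' => Order.max (X w' - t%:E) 0) w.

Definition spec_pinfty (R : realType) (K : topologicalType) (E : set (K -> \bar R))
    (X : K -> \bar R) : K -> \bar R :=
  xget (fun _ => 0) (is_lub_in E (range (spec E X))).

Definition spec_ninfty (R : realType) (K : topologicalType) (E : set (K -> \bar R))
    (X : K -> \bar R) : K -> \bar R :=
  xget (fun _ => 0) (is_glb_in E (range (spec E X))).

Inductive intv (R : realType) := Ioc of R & R | Ioi of R | Iic of R.

Definition in_intv (R : realType) (J : intv R) (t : R) : bool :=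
  match J with
  | Ioc a b => ((a < t) && (t <= b))%R
  | Ioi a => (a < t)%R
  | Iic b => (t <= b)%R
  end.

Definition intv_wf (R : realType) (J : intv R) : bool :=
  match J with Ioc a b => (a < b)%R | _ => true end.

Definition muA (R : realType) (K : topologicalType) (E : set (K -> \bar R))
    (X : K -> \bar R) (J : intv R) : K -> \bar R :=
  fun w => match J with
  | Ioc a b => spec E X b w - spec E X a w
  | Ioi a => spec_pinfty E X w - spec E X a w
  | Iic b => spec E X b w - spec_ninfty E X w
  end.

(** An element of L is given by a representation
    [:: (a_1, S_1); ...; (a_n, S_n)] where each S_i in F(R) is a finite
    disjoint union of generating intervals (a list), and the S_i partition R. *)
Definition Lrep (R : realType) := seq (R * seq (intv R)).

Definition Lrep_intvs (R : realType) (r : Lrep R) : seq (intv R) :=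
  flatten [seq p.2 | p <- r].

Definition Lrep_wf (R : realType) (r : Lrep R) : Prop :=
  let s := Lrep_intvs r in
  [/\ all (@intv_wf R) s,
      (forall i j, (i < j < size s)%N -> forall t,
          ~~ (in_intv (nth (Iic 0%R) s i) t && in_intv (nth (Iic 0%R) s j) t))
    & (forall t : R, has (fun J => in_intv J t) s)].

Definition Lrep_fun (R : realType) (r : Lrep R) : R -> R :=
  fun t => (\sum_(p <- r) \sum_(J <- p.2) (if in_intv J t then p.1 else 0))%R.

Definition Ival (R : realType) (K : topologicalType) (E : set (K -> \bar R))
    (X : K -> \bar R) (r : Lrep R) : K -> \bar R :=
  fun w => \sum_(p <- r) (p.1%:E * \sum_(J <- p.2) muA E X J w).

Definition incr_to (R : realType) (fn : nat -> R -> R) (f : R -> R) : Prop :=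
  forall t, {homo (fun n => fn n t) : n m / (n <= m)%N >-> (n <= m)%R}
            /\ (fun n => fn n t) @ \oo --> f t.

Definition Esup (R : realType) (K : topologicalType) (E : set (K -> \bar R)) :
    set (K -> \bar R) :=
  [set h | continuous h /\ exists g, E g /\ forall w, g w <= h w].

(* The lower dyadic step functions f_n of f (the infimum of f on each dyadic
   interval of length 2^-n in (-n, n], zero elsewhere) lie in L and increase to f.
   On K, the band projection onto (X - t)^+ is the indicator of the clopen set
   G_t = closure {X > t}, so A_t = 1 off G_t, A_oo = 1 and A_-oo = 0. Hence at a
   point w, seen from finitely many intervals, mu_A is a Dirac mass at a real y
   that can be taken close to X(w), or of large modulus when X(w) = +-oo; then
   I(f_n)(w) = f_n(y) <= f(y), which is close to (f o X)(w). At the finite local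
   maxima of X, which are dense, y = X(w) itself works, so a continuous upper
   bound of the I(f_n) dominates f o X on a dense set, hence everywhere. *)

From mathcomp Require Import all_boot all_order all_algebra.
From mathcomp Require Import all_classical all_reals all_analysis.
From mathcomp Require Import ring lra zify.
Set Implicit Arguments. Unset Strict Implicit. Unset Printing Implicit Defensive.
Import Order.TTheory GRing.Theory Num.Theory.
Import numFieldTopology.Exports numFieldNormedType.Exports.
Local Open Scope classical_set_scope.
Local Open Scope ring_scope.

Section RealFacts.
Variable R : realType.

Lemma ereal_lt_dense_fin (x y : \bar R) :
  (x < y)%E -> exists c : R, (x < c%:E < y)%E.
Proof.
case: x => [r||]; case: y => [s||] //=.
- rewrite lte_fin => rs; exists ((r + s) / 2); rewrite !lte_fin.
  by apply/andP; split; rewrite midf_lt.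
- by move=> _; exists (r + 1); rewrite !lte_fin ltrDl ltr01 ltry.
- by move=> _; exists (s - 1); rewrite ltNyr lte_fin gtrDl oppr_lt0 ltr01.
- by move=> _; exists 0; rewrite ltNyr ltry.
Qed.

Lemma nondecreasing_le_cvg (u : nat -> R) l :
  {homo u : n m / (n <= m)%N >-> n <= m} -> u @ \oo --> l -> forall n, u n <= l.
Proof.
move=> hu hc n; have := nondecreasing_cvgn_le hu (cvgP _ hc) n.
by rewrite (cvg_lim _ hc).
Qed.

Lemma cvg_le_ub (u : nat -> R) l b :
  u @ \oo --> l -> (forall n, u n <= b) -> l <= b.
Proof.
move=> hc hb; rewrite -(cvg_lim _ hc) //.
by apply: limr_le; [exact: cvgP hc | exact: nearW].
Qed.

Lemma exists_gap_right (ts : seq R) (x eta : R) : 0 < eta ->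
  exists y, [/\ x < y, y < x + eta & forall t, t \in ts -> ~ (x < t < y)].
Proof.
move=> e0; elim: ts => [|t ts [y [xy yx h]]].
  exists (x + eta / 2); split => //; first by rewrite ltrDl divr_gt0.
  by rewrite ltrD2l ltr_pdivrMr // ltr_pMr // ltr1n.
case: (boolP (x < t < y)) => [/andP[xt ty]|nt].
  exists t; split => //; first exact: lt_trans ty yx.
  move=> t'; rewrite inE => /orP[/eqP -> /andP[_]|/h ht' /andP[a b]]; first by rewrite ltxx.
  by apply: ht'; rewrite a (lt_trans b ty).
exists y; split => // t'; rewrite inE => /orP[/eqP -> hh|/h //].
by rewrite hh in nt.
Qed.

Lemma exists_gt_seq (ts : seq R) (M : R) :
  exists y, M < y /\ forall t, t \in ts -> t < y.
Proof.
elim: ts => [|t ts [y [My h]]]; first by exists (M + 1); rewrite ltrDl.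
exists (Num.max y (t + 1)); split; first by rewrite lt_max My.
move=> t'; rewrite inE => /orP[/eqP ->|/h ht']; rewrite lt_max ?ltrDl ?ltr01 ?orbT //.
by rewrite ht'.
Qed.

Lemma exists_lt_seq (ts : seq R) (M : R) :
  exists y, y < M /\ forall t, t \in ts -> y < t.
Proof.
have [y [My h]] := exists_gt_seq (map -%R ts) (- M).
exists (- y); split; first by rewrite ltrNl.
by move=> t ht; rewrite ltrNl; apply: h; exact: map_f.
Qed.

Lemma continuous_bounded_support_ub (f : R -> R) (M : R) : continuous f ->
  (forall x, M < `|x| -> f x = 0) -> exists B, forall x, f x <= B.
Proof.
move=> fc hM.
have cf : {within `[- `|M|, `|M|], continuous f} by apply: continuous_subspaceT.
have [c _ hc] := EVT_max (ge0_cp (normr_ge0 M)).2 cf.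
exists (Num.max (f c) 0) => x; rewrite le_max; case: (leP `|x| `|M|) => hx.
  by rewrite hc // in_itv /= -ler_norml.
by rewrite hM ?lexx ?orbT // (le_lt_trans (ler_norm M) hx).
Qed.

Lemma continuous_dist_lt (f : R -> R) x e :
  continuous f -> 0 < e ->
  exists2 d, 0 < d & forall t, `|t - x| < d -> `|f t - f x| < e.
Proof.
move=> fc e0; have [d /= d0 hd] := (nbhs_ballP x _).1 (cvgr_dist_lt _ _ (fc x) _ e0).
by exists d => // t ht; rewrite distrC; apply: hd; rewrite -ball_normE /= distrC.
Qed.

End RealFacts.

Lemma compact_hausdorff_shrink (K : topologicalType) (w : K) (W : set K) :
  hausdorff_space K -> compact [set: K] -> nbhs w W ->
  exists V : set K, [/\ open V, V w & closure V `<=` W].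
Proof.
move=> hK cK Ww.
have [B Bw BW] := @compact_regular K w setT hK cK (@filterT _ (nbhs w) _) W Ww.
exists B°; split; [exact: open_interior | exact: Bw |].
by apply: subset_trans BW; apply: closureS; exact: interior_subset.
Qed.

Lemma nowhere_dense0 (K : topologicalType) : nowhere_dense (@set0 K).
Proof. by rewrite /nowhere_dense closure0 interior0. Qed.

Lemma nowhere_dense_avoid (K : topologicalType) (S U : set K) (w : K) :
  nowhere_dense S -> open U -> U w -> exists2 w', U w' & ~ S w'.
Proof.
move=> nS oU Uw; apply: contrapT => hn.
have US : U `<=` closure S.
  by move=> x Ux; apply: subset_closure; apply: contrapT => Sx; apply: hn; exists x.
have : (closure S)° w by move: US; rewrite open_subsetE // => /(_ w Uw).
by rewrite nS.
Qed.

Section ExtendedValued.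
Variables (R : realType) (K : topologicalType).
Local Open Scope ereal_scope.

Lemma le_of_dense_le (a b : K -> \bar R) : continuous a -> continuous b ->
  (forall U w, open U -> U w -> exists2 w', U w' & a w' <= b w') ->
  forall w, a w <= b w.
Proof.
move=> ca cb hd w; rewrite leNgt; apply/negP => /ereal_lt_dense_fin [c /andP[bc ca']].
have o1 : open (a @^-1` [set y | c%:E < y]).
  by apply: open_comp; [move=> x _; exact: ca | exact: open_ereal_gt_ereal].
have o2 : open (b @^-1` [set y | y < c%:E]).
  by apply: open_comp; [move=> x _; exact: cb | exact: open_ereal_lt_ereal].
have [w' [/= h1 h2] h3] := hd _ w (openI o1 o2) (conj ca' bc).
by move: (lt_trans h2 h1); rewrite ltNge h3.
Qed.

Lemma closed_level (v : K -> \bar R) c : continuous v -> closed [set w | v w = c].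
Proof.
move=> cv.
have -> : [set w | v w = c] = v @^-1` [set y | c <= y] `&` v @^-1` [set y | y <= c].
  apply/seteqP; split => w /=; first by move=> ->.
  by case=> h1 h2; apply/eqP; rewrite eq_le h1 h2.
by apply: closedI; apply: preimage_closed;
  [move=> x _; exact: cv | exact: closed_ereal_le_ereal
  |move=> x _; exact: cv | exact: closed_ereal_ge_ereal].
Qed.

Lemma closure_level (v : K -> \bar R) c (A : set K) : continuous v ->
  (forall w, A w -> v w = c) -> forall w, closure A w -> v w = c.
Proof.
by move=> cv hA w Aw; have cl := @closed_level v c cv; apply: cl; exact: (closureS hA).
Qed.

Lemma disjP (u v : K -> \bar R) : disj u v <-> forall w, u w = 0 \/ v w = 0.
Proof.
split => h w.
  by move: (h w); rewrite /Order.min; case: ifP => _ /eqP; rewrite abse_eq0 => /eqP; auto.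
by case: (h w) => ->; rewrite abse0; [rewrite min_l | rewrite min_r]; rewrite ?abse_ge0.
Qed.

Lemma is_lub_in_unique (S A : set (K -> \bar R)) u u' :
  is_lub_in S A u -> is_lub_in S A u' -> u = u'.
Proof.
case=> Su ub lst [Su' ub' lst']; apply/funext => w; apply/eqP.
by rewrite eq_le (lst _ Su' ub') (lst' _ Su ub).
Qed.

Lemma is_glb_in_unique (S A : set (K -> \bar R)) u u' :
  is_glb_in S A u -> is_glb_in S A u' -> u = u'.
Proof.
case=> Su lb gst [Su' lb' gst']; apply/funext => w; apply/eqP.
by rewrite eq_le (gst _ Su' lb') (gst' _ Su lb).
Qed.

Definition eindic (C : set K) : K -> \bar R := fun w => if `[< C w >] then 1 else 0.

Lemma eindicT (C : set K) w : C w -> eindic C w = 1.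
Proof. by move=> Cw; rewrite /eindic asboolT. Qed.

Lemma eindicF (C : set K) w : ~ C w -> eindic C w = 0.
Proof. by move=> Cw; rewrite /eindic asboolF. Qed.

Lemma eindicC (C : set K) w : 1 - eindic C w = eindic (~` C) w.
Proof.
case: (pselect (C w)) => Cw; last by rewrite eindicF // eindicT // sube0.
by rewrite eindicT // eindicF ?subee // => /(_ Cw).
Qed.

Lemma eindic_continuous (C : set K) : open C -> closed C -> continuous (eindic C).
Proof.
move=> oC cC w; apply: (near_cst_continuous (eindic C w)).
case: (pselect (C w)) => Cw.
  have : nbhs w C by apply: open_nbhs_nbhs.
  by apply: filterS => y Cy; rewrite !eindicT.
have : nbhs w (~` C) by apply: open_nbhs_nbhs; split => //; exact: closed_openC.
by apply: filterS => y Cy; rewrite !eindicF.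
Qed.

Lemma Cinf_eindic (C : set K) : open C -> closed C -> Cinf (eindic C).
Proof.
move=> oC cC; split; first exact: eindic_continuous.
have -> : [set w | eindic C w = +oo \/ eindic C w = -oo] = set0.
  by apply/seteqP; split => w //=; rewrite /eindic; case: asboolP => _ [].
exact: nowhere_dense0.
Qed.

End ExtendedValued.

Section DyadicApproximation.
Variable R : realType.

Definition grid (n k : nat) : R := k%:R / 2 ^+ n - n%:R.

Definition grid_last (n : nat) : nat := (2 * n * 2 ^ n)%N.

Lemma grid0 n : grid n 0 = - n%:R.
Proof. by rewrite /grid mul0r add0r. Qed.

Lemma grid_last_val n : grid n (grid_last n) = n%:R.
Proof.
rewrite /grid /grid_last natrM natrX mulrK ?unitfE ?expf_neq0 ?pnatr_eq0 //.
by rewrite natrM mulr2n mulrDl mul1r addrK.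
Qed.

Lemma grid_lt n i j : (grid n i < grid n j) = (i < j)%N.
Proof. by rewrite /grid ltrD2r ltr_pM2r ?invr_gt0 ?exprn_gt0 // ltr_nat. Qed.

Lemma grid_le n i j : (grid n i <= grid n j) = (i <= j)%N.
Proof. by rewrite /grid lerD2r ler_pM2r ?invr_gt0 ?exprn_gt0 // ler_nat. Qed.

Lemma grid_refine n k : grid n k = grid n.+1 (2 * k + 2 ^ n.+1)%N.
Proof.
rewrite /grid natrD !natrM natrX exprS.
have h : (2 : R) ^+ n != 0 by rewrite expf_neq0 // pnatr_eq0.
by field; rewrite h //= ?pnatr_eq0.
Qed.

Lemma gridS n k : grid n k.+1 = grid n k + (2 ^+ n)^-1.
Proof. by rewrite /grid -natr1 mulrDl mul1r addrAC. Qed.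

(* For k = 0, ..., grid_last n + 1 these intervals partition R: the two
   unbounded ends and the dyadic intervals of length 2^-n covering (-n, n]. *)
Definition grid_intv n k : intv R :=
  if k == 0%N then Iic (grid n 0)
  else if (k <= grid_last n)%N then Ioc (grid n k.-1) (grid n k)
  else Ioi (grid n (grid_last n)).

Lemma grid_intv_wf n k : intv_wf (grid_intv n k).
Proof.
rewrite /grid_intv; case: eqP => // k0; case: ifP => // _ /=.
by rewrite grid_lt; case: k k0.
Qed.

Lemma in_grid_intv_le n i t :
  (i <= grid_last n)%N -> in_intv (grid_intv n i) t -> t <= grid n i.
Proof.
by rewrite /grid_intv; case: eqP => [-> //|i0 iL]; rewrite iL /= => /andP[].
Qed.

Lemma in_grid_intv_gt n j t : (0 < j <= (grid_last n).+1)%N ->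
  in_intv (grid_intv n j) t -> grid n j.-1 < t.
Proof.
case/andP=> j0 jL; rewrite /grid_intv; case: eqP => [j0'|_]; first by rewrite j0' in j0.
case: ifP => [_ /andP[] //|jL'].
by have -> : j = (grid_last n).+1 by apply/eqP; rewrite eqn_leq jL ltnNge jL'.
Qed.

Lemma in_grid_intv_inner n k t : (0 < k <= grid_last n)%N ->
  in_intv (grid_intv n k) t -> grid n k.-1 < t <= grid n k.
Proof.
case/andP=> k0 kL; rewrite /grid_intv; case: eqP => [k0'|_]; first by rewrite k0' in k0.
by rewrite kL.
Qed.

Lemma grid_intv_disj n i j t : (i < j <= (grid_last n).+1)%N ->
  ~~ (in_intv (grid_intv n i) t && in_intv (grid_intv n j) t).
Proof.
case/andP=> ij jL; apply/negP => /andP[hi hj].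
have iL : (i <= grid_last n)%N by rewrite -ltnS (leq_trans ij jL).
have j0 : (0 < j)%N by case: j ij {jL hj}.
have := lt_le_trans (in_grid_intv_gt (introT andP (conj j0 jL)) hj)
  (in_grid_intv_le iL hi).
by rewrite grid_lt; case: j ij {jL hj j0} => // j; rewrite ltnS => /leq_gtF ->.
Qed.

Lemma grid_intv_cover n t :
  exists k, (k <= (grid_last n).+1)%N /\ in_intv (grid_intv n k) t.
Proof.
case: (leP t (grid n 0)) => t0; first by exists 0%N; rewrite /grid_intv eqxx.
case: (ltP (grid n (grid_last n)) t) => tL.
  by exists (grid_last n).+1; split => //; rewrite /grid_intv /= ltnn.
have exP : exists k, t <= grid n k by exists (grid_last n).
case: (ex_minnP exP) => m Pm minm.
have mL : (m <= grid_last n)%N by apply: minm.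
have m0 : m != 0%N by apply: contraTneq Pm => ->; rewrite -ltNge.
exists m; split; first exact: leq_trans mL (leqnSn _).
rewrite /grid_intv (negPf m0) mL /= Pm andbT ltNge; apply/negP => /minm.
by case: (m) m0 => // m' _; rewrite ltnn.
Qed.

Lemma grid_index_inner n k t : (k <= (grid_last n).+1)%N ->
  - n%:R < t <= n%:R -> in_intv (grid_intv n k) t -> (0 < k <= grid_last n)%N.
Proof.
move=> kL /andP[tn tn'] hk; apply/andP; split.
  rewrite lt0n; apply: contraTneq hk => ->; rewrite /grid_intv /= grid0 -ltNge //.
rewrite leqNgt; apply: contraTN hk => hlt.
have e : k = (grid_last n).+1 by apply/eqP; rewrite eqn_leq kL hlt.
rewrite /grid_intv e /= ltnn grid_last_val -leNgt //.
Qed.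

Variable f : R -> R.
Hypotheses (fc : continuous f) (f0 : forall x, 0 <= f x).

Definition grid_cell n k : set R := f @` [set x | grid n k.-1 <= x <= grid n k].

Definition grid_inf n k : R :=
  if (0 < k <= grid_last n)%N then inf (grid_cell n k) else 0.

Definition dyadic_lower n : Lrep R :=
  [seq (grid_inf n k, [:: grid_intv n k]) | k <- iota 0 (grid_last n).+2].

Lemma grid_inf_ge0 n k : 0 <= grid_inf n k.
Proof.
rewrite /grid_inf; case: ifP => // /andP[k0 _].
apply: lb_le_inf; last by move=> _ [x _ <-].
by exists (f (grid n k)), (grid n k); rewrite //= lexx andbT grid_le leq_pred.
Qed.

Lemma grid_inf_le n k x : (0 < k <= grid_last n)%N ->
  grid n k.-1 <= x <= grid n k -> grid_inf n k <= f x.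
Proof.
move=> hk hx; rewrite /grid_inf hk; apply: ge_inf; last by exists x.
by exists 0 => _ [y _ <-].
Qed.

Lemma grid_inf_ge n k b : (0 < k <= grid_last n)%N ->
  (forall x, grid n k.-1 <= x <= grid n k -> b <= f x) -> b <= grid_inf n k.
Proof.
move=> hk hb; rewrite /grid_inf hk; apply: lb_le_inf; last by move=> _ [x hx <-]; exact: hb.
by exists (f (grid n k)), (grid n k); rewrite //= lexx andbT grid_le leq_pred.
Qed.

Lemma dyadic_lower_wf n : Lrep_wf (dyadic_lower n).
Proof.
rewrite /Lrep_wf.
have -> : Lrep_intvs (dyadic_lower n) = [seq grid_intv n k | k <- iota 0 (grid_last n).+2].
  by rewrite /Lrep_intvs /dyadic_lower; elim: (iota _ _) => //= k s ->.
split.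
- by rewrite all_map; apply/allP => k _; exact: grid_intv_wf.
- move=> i j /andP[ij]; rewrite size_map size_iota => jL t.
  rewrite !(nth_map 0%N) ?size_iota ?(ltn_trans ij jL) // !nth_iota ?(ltn_trans ij jL) //.
  by apply: grid_intv_disj; rewrite ij.
- move=> t; have [k [kL hk]] := grid_intv_cover n t.
  by rewrite has_map; apply/hasP; exists k; rewrite // mem_iota add0n ltnS.
Qed.

Lemma dyadic_lowerE n t k : (k <= (grid_last n).+1)%N ->
  in_intv (grid_intv n k) t -> Lrep_fun (dyadic_lower n) t = grid_inf n k.
Proof.
move=> kL hk; rewrite /Lrep_fun /dyadic_lower big_map.
under eq_bigr do rewrite big_seq1.
rewrite (bigD1_seq k) ?mem_iota ?add0n ?ltnS ?iota_uniq // hk.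
rewrite big1_seq; first by rewrite /= addr0.
move=> i /andP[ik]; rewrite mem_iota add0n ltnS => iL.
case: ifP => // hi; exfalso.
case: (ltngtP i k) => [lt|gt|eq]; last by rewrite eq eqxx in ik.
  by have := grid_intv_disj t (introT andP (conj lt kL)); rewrite hi hk.
by have := grid_intv_disj t (introT andP (conj gt iL)); rewrite hi hk.
Qed.

Lemma dyadic_lower_le_succ n t :
  Lrep_fun (dyadic_lower n) t <= Lrep_fun (dyadic_lower n.+1) t.
Proof.
have [k [kL hk]] := grid_intv_cover n t; have [k' [kL' hk']] := grid_intv_cover n.+1 t.
rewrite (dyadic_lowerE kL hk) (dyadic_lowerE kL' hk').
case hkm: (0 < k <= grid_last n)%N; last by rewrite /grid_inf hkm grid_inf_ge0.
have /andP[t1 t2] := in_grid_intv_inner hkm hk.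
have tn : - n.+1%:R < t <= n.+1%:R.
  have : grid n 0 <= grid n k.-1 by rewrite grid_le.
  have : grid n k <= grid n (grid_last n) by rewrite grid_le; case/andP: hkm.
  rewrite grid0 grid_last_val -natr1 => *; apply/andP; split; lra.
have hk'm := grid_index_inner kL' tn hk'.
have /andP[s1 s2] := in_grid_intv_inner hk'm hk'.
(* the level n+1 cell containing t lies inside the level n cell containing t *)
apply: grid_inf_ge => // x /andP[x1 x2]; apply: grid_inf_le => //; apply/andP; split.
  apply: le_trans x1; rewrite (grid_refine n k.-1) grid_le leqNgt; apply/negP => lt.
  have : grid n k.-1 < grid n.+1 k' by exact: lt_le_trans t1 s2.
  by rewrite (grid_refine n k.-1) grid_lt; lia.
apply: (le_trans x2); rewrite (grid_refine n k) grid_le leqNgt; apply/negP => lt.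
have : grid n.+1 k'.-1 < grid n k by exact: lt_le_trans s1 t2.
by rewrite (grid_refine n k) grid_lt; lia.
Qed.

Lemma grid_inf_near n k t d e : (0 < k <= grid_last n)%N ->
  in_intv (grid_intv n k) t -> (2 ^+ n)^-1 < d ->
  (forall x, `|x - t| < d -> `|f x - f t| < e) ->
  f t - e <= grid_inf n k <= f t.
Proof.
move=> km hk nd hd; have /andP[t1 t2] := in_grid_intv_inner km hk.
have step : grid n k = grid n k.-1 + (2 ^+ n)^-1.
  by rewrite -gridS prednK //; case/andP: km.
apply/andP; split; last by apply: grid_inf_le => //; rewrite t2 ltW.
apply: grid_inf_ge => // x /andP[x1 x2].
have hx : `|x - t| < d by rewrite ltr_norml; apply/andP; split; lra.
by have := hd x hx; rewrite ltr_norml => /andP[a _]; lra.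
Qed.

Lemma dyadic_lower_cvg t : (fun n => Lrep_fun (dyadic_lower n) t) @ \oo --> f t.
Proof.
apply/cvgrPdist_le => e e0.
have [d d0 hd] := continuous_dist_lt t fc e0.
exists (Num.Def.archi_bound (`|t| + d^-1)) => // n /= Nn.
have nR : `|t| + d^-1 < n%:R.
  apply: (lt_le_trans (archi_boundP _)); last by rewrite ler_nat.
  by rewrite addr_ge0 // invr_ge0 ltW.
have tn : - n%:R < t <= n%:R.
  have td : `|t| < n%:R by apply: le_lt_trans nR; rewrite lerDl invr_ge0 ltW.
  by move: td => /ltr_normlP [a b]; apply/andP; split; lra.
have nd : (2 ^+ n)^-1 < d.
  rewrite invf_plt ?posrE ?exprn_gt0 //.
  have : n%:R < 2 ^+ n :> R by rewrite -natrX ltr_nat ltn_expl.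
  have := normr_ge0 t; lra.
have [k [kL hk]] := grid_intv_cover n t.
have /andP[lo hi] := grid_inf_near (grid_index_inner kL tn hk) hk nd hd.
by rewrite (dyadic_lowerE kL hk) ger0_norm ?subr_ge0 //; lra.
Qed.

Lemma dyadic_lower_incr_to : incr_to (fun n => Lrep_fun (dyadic_lower n)) f.
Proof.
move=> t; split; last exact: dyadic_lower_cvg.
by apply/nondecreasing_seqP => n; exact: dyadic_lower_le_succ.
Qed.

End DyadicApproximation.

Section SpectralSystem.
Variables (R : realType) (K : topologicalType) (E : set (K -> \bar R)) (X : K -> \bar R).
Hypotheses (hK : hausdorff_space K) (cK : compact [set: K])
  (eK : extremally_disconnected K) (hE : order_dense_ideal_with_unit E) (EX : E X).
Local Open Scope ereal_scope.

Let E_Cinf : E `<=` @Cinf R K. Proof. by case: hE. Qed.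
Let E1 : E (fun _ => 1). Proof. by case: hE => _ []. Qed.
Let E_scale (c : R) g : E g -> E (fun w => c%:E * g w).
Proof. by case: hE => _ [_ [_ sc _ _]]; exact: sc. Qed.
Let E_ideal g h : E g -> @Cinf R K h -> (forall w, `|h w| <= `|g w|) -> E h.
Proof. by case: hE => _ [_ [_ _ id _]]; exact: id. Qed.
Let E_order_dense g : @Cinf R K g -> (forall w, 0 <= g w) -> (exists w, g w != 0) ->
  exists h, [/\ E h, forall w, 0 <= h w <= g w & exists w, h w != 0].
Proof.
case: hE => _ [_ [_ _ _ dense]] Cg g0 g1.
by have [h [? [? ?]]] := dense g Cg g0 g1; exists h.
Qed.

Lemma E_continuous g : E g -> continuous g. Proof. by move=> /E_Cinf []. Qed.

Let Xc : continuous X. Proof. exact: E_continuous. Qed.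

Lemma E_eindic (C : set K) : open C -> closed C -> E (eindic R C).
Proof.
move=> oC cC; apply: (E_ideal E1); first exact: Cinf_eindic.
by move=> w; rewrite /eindic; case: asboolP => _; rewrite ?abse0 ?abse_ge0.
Qed.

Lemma open_X_gt t : open [set w | t%:E < X w].
Proof.
by apply: (@open_comp _ _ X [set y | t%:E < y]);
  [move=> x _; exact: Xc | exact: open_ereal_gt_ereal].
Qed.

Lemma open_X_lt t : open [set w | X w < t%:E].
Proof.
by apply: (@open_comp _ _ X [set y | y < t%:E]);
  [move=> x _; exact: Xc | exact: open_ereal_lt_ereal].
Qed.

Definition closure_gt (t : R) := closure [set w | t%:E < X w].

Lemma open_closure_gt t : open (closure_gt t). Proof. exact: eK (open_X_gt t). Qed.

Lemma closed_closure_gt t : closed (closure_gt t). Proof. exact: closed_closure. Qed.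

Lemma closure_gt_anti s t : (s <= t)%R -> closure_gt t `<=` closure_gt s.
Proof. by move=> st; apply: closureS => w /=; apply: le_lt_trans; rewrite lee_fin. Qed.

Lemma closure_gtW t w : t%:E < X w -> closure_gt t w.
Proof. by move=> h; apply: subset_closure. Qed.

Lemma notin_closure_gt t w : X w < t%:E -> ~ closure_gt t w.
Proof.
move=> h /(_ [set w | X w < t%:E]) [].
  by apply: open_nbhs_nbhs; split => //; exact: open_X_lt.
by move=> x [/= h1 h2]; move: (lt_trans h1 h2); rewrite ltxx.
Qed.

Definition excess (t : R) := fun w => Order.max (X w - t%:E) 0.

Lemma excess_eq0 t w : excess t w = 0 <-> ~ (t%:E < X w).
Proof.
rewrite /excess; split.
  move=> h ht; have : 0 < Order.max (X w - t%:E) 0 by rewrite lt_max sube_gt0 ht.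
  by rewrite h ltxx.
by move=> /negP; rewrite -leNgt -sube_le0 => h; rewrite max_r.
Qed.

Lemma is_bproj_unit_excess t : is_bproj_unit E (excess t) (eindic R (closure_gt t)).
Proof.
split.
- exact: E_eindic (@open_closure_gt t) (@closed_closure_gt t).
- move=> z Ez /disjP hz; apply/disjP => w.
  case: (pselect (closure_gt t w)) => Gw; last by left; rewrite eindicF.
  right; apply: (closure_level (E_continuous Ez) _ Gw) => w' /= hw'.
  by case: (hz w') => // /excess_eq0.
- have -> : (fun w => 1 - eindic R (closure_gt t) w) = eindic R (~` closure_gt t).
    by apply/funext => w; rewrite eindicC.
  apply: E_eindic; first exact: closed_openC (@closed_closure_gt t).
  exact: open_closedC (@open_closure_gt t).
- apply/disjP => w; case: (pselect (t%:E < X w)) => h; last by right; apply/excess_eq0.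
  by left; rewrite eindicC eindicF // => /(_ (closure_gtW h)).
Qed.

Lemma bproj_excess_eq1 t u w :
  is_bproj_unit E (excess t) u -> closure_gt t w -> u w = 1.
Proof.
case=> Eu _ _ /disjP h1u Gw; apply: (closure_level (E_continuous Eu) _ Gw) => x hx.
case: (h1u x) => [|/excess_eq0 //].
by case: (u x) => [r||] //= /eqP; rewrite ?eqe subr_eq0 => /eqP <-.
Qed.

Lemma bproj_excess_eq0 t u w :
  is_bproj_unit E (excess t) u -> ~ closure_gt t w -> u w = 0.
Proof.
case=> Eu hu _ _ Gw; apply: contrapT => uw0.
set W := ~` closure_gt t `&` ~` [set w | u w = 0].
have oW : open W.
  apply: openI; first exact: closed_openC (@closed_closure_gt t).
  exact: closed_openC (@closed_level R K u 0 (E_continuous Eu)).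
have [V [oV Vw VW]] := compact_hausdorff_shrink hK cK (open_nbhs_nbhs (conj oW (conj Gw uw0))).
set C := closure V.
have oC : open C := @eK V oV.
(* a nonzero element of E below the clopen indicator of C is disjoint from
   [excess t], hence from u, although u does not vanish on C *)
have [z [Ez zC [w0 zw0]]] :
    exists z, [/\ E z, forall x, 0 <= z x <= eindic R C x & exists w0, z w0 != 0].
  apply: E_order_dense; first exact: Cinf_eindic (@closed_closure _ V).
    by move=> x; rewrite /eindic; case: asboolP.
  by exists w; rewrite eindicT //; apply: subset_closure.
have z0 x : ~ C x -> z x = 0.
  by move=> Cx; have := zC x; rewrite eindicF // => /andP[a b]; apply/eqP; rewrite eq_le a b.
have Cw0 : C w0 by apply: contrapT => /z0 h; rewrite h eqxx in zw0.
have dz : disj z (excess t).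
  apply/disjP => x; case: (pselect (C x)) => [Cx|/z0]; last by left.
  by right; apply/excess_eq0 => /closure_gtW; case: (VW x Cx).
have [|h] := (disjP _ _).1 (hu z Ez dz) w0; first by case: (VW w0 Cw0).
by rewrite h eqxx in zw0.
Qed.

Lemma specE t w : spec E X t w = eindic R (~` closure_gt t) w.
Proof.
have uniq u : is_bproj_unit E (excess t) u -> u = eindic R (closure_gt t).
  move=> hu; apply/funext => x; case: (pselect (closure_gt t x)) => Gx.
    by rewrite eindicT // (bproj_excess_eq1 hu).
  by rewrite eindicF // (bproj_excess_eq0 hu).
by rewrite /spec /bproj_unit (xget_unique _ (is_bproj_unit_excess t) uniq) eindicC.
Qed.

Lemma spec_eq1 t w : ~ closure_gt t w -> spec E X t w = 1.
Proof. by move=> h; rewrite specE eindicT. Qed.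

Lemma spec_eq0 t w : closure_gt t w -> spec E X t w = 0.
Proof. by move=> h; rewrite specE eindicF // => /(_ h). Qed.

Lemma spec01 t w : spec E X t w = 0 \/ spec E X t w = 1.
Proof. by rewrite specE /eindic; case: asboolP; auto. Qed.

Lemma E0 : E (fun _ => 0).
Proof. by have := E_scale 0 E1; congr E; apply/funext => w; rewrite mul0e. Qed.

Lemma dense_X_fin U w : open U -> U w -> exists2 w', U w' & X w' \is a fin_num.
Proof.
move=> oU Uw; have [w' Uw' hw'] := nowhere_dense_avoid (E_Cinf EX).2 oU Uw.
exists w' => //; rewrite fin_numE; apply/andP.
by split; apply/negP => /eqP h; apply: hw'; rewrite /= h; auto.
Qed.

Lemma spec_pinftyE : spec_pinfty E X = (fun _ => 1).
Proof.
have lub1 : is_lub_in E (range (spec E X)) (fun _ => 1).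
  split; [exact: E1 | by move=> a [t _ <-] w; have [->|->] := spec01 t w |].
  move=> v Ev hv; apply: le_of_dense_le; [exact: cst_continuous | exact: E_continuous |].
  move=> U w oU Uw; have [w' Uw' fw'] := dense_X_fin oU Uw; exists w' => //.
  apply: (le_trans _ (hv _ (ex_intro2 _ _ (fine (X w') + 1)%R I erefl) w')).
  by rewrite spec_eq1 //; apply: notin_closure_gt; rewrite -(fineK fw') lte_fin ltrDl.
rewrite /spec_pinfty; apply: xget_unique => // y hy.
exact: is_lub_in_unique hy lub1.
Qed.

Lemma spec_ninftyE : spec_ninfty E X = (fun _ => 0).
Proof.
have glb0 : is_glb_in E (range (spec E X)) (fun _ => 0).
  split; [exact: E0 | by move=> a [t _ <-] w; have [->|->] := spec01 t w |].
  move=> v Ev hv; apply: le_of_dense_le; [exact: E_continuous | exact: cst_continuous |].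
  move=> U w oU Uw; have [w' Uw' fw'] := dense_X_fin oU Uw; exists w' => //.
  apply: (le_trans (hv _ (ex_intro2 _ _ (fine (X w') - 1)%R I erefl) w')).
  by rewrite spec_eq0 //; apply: closure_gtW; rewrite -(fineK fw') lte_fin gtrDl oppr_lt0.
rewrite /spec_ninfty; apply: xget_unique => // y hy.
exact: is_glb_in_unique hy glb0.
Qed.

Definition intv_ends (J : intv R) : seq R :=
  match J with Ioc a b => [:: a; b] | Ioi a => [:: a] | Iic b => [:: b] end.

(* At w, seen from the points of ts, the spectral system is that of the
   constant y: mu_A(J)(w) is the Dirac mass of y whenever the ends of J are in ts. *)
Definition spec_dirac_on w (y : R) (ts : seq R) :=
  forall t, t \in ts -> spec E X t w = (if (y <= t)%R then 1 else 0).

Lemma muA_dirac J w y : intv_wf J -> spec_dirac_on w y (intv_ends J) ->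
  muA E X J w = (if in_intv J y then 1 else 0).
Proof.
case: J => [a b|a|b] /= wf h.
- rewrite (h a) ?inE ?eqxx // (h b) ?inE ?eqxx ?orbT //.
  case: (leP y a) => ya; first by rewrite (le_trans ya (ltW wf)) subee.
  by case: (leP y b) => yb; rewrite ?sube0 ?subee.
- rewrite spec_pinftyE (h a) ?inE ?eqxx //.
  by case: (leP y a) => ya; rewrite ?subee ?sube0.
- rewrite spec_ninftyE (h b) ?inE ?eqxx //.
  by case: (leP y b) => yb; rewrite sube0.
Qed.

Lemma spec_dirac_on_cat w y ts ts' :
  spec_dirac_on w y (ts ++ ts') -> spec_dirac_on w y ts /\ spec_dirac_on w y ts'.
Proof. by move=> h; split => t ht; apply: h; rewrite mem_cat ht ?orbT. Qed.

Lemma sum_muA_dirac (s : seq (intv R)) w y : all (@intv_wf R) s ->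
  spec_dirac_on w y (flatten (map intv_ends s)) ->
  \sum_(J <- s) muA E X J w = (\sum_(J <- s) (if in_intv J y then 1 else 0))%:E.
Proof.
elim: s => [|J s IH] /=; first by rewrite !big_nil.
move=> /andP[wJ ws] /spec_dirac_on_cat[hJ hs].
by rewrite !big_cons IH // (muA_dirac wJ hJ); case: ifP.
Qed.

Lemma Ival_dirac (r : Lrep R) w y : all (@intv_wf R) (Lrep_intvs r) ->
  spec_dirac_on w y (flatten (map intv_ends (Lrep_intvs r))) ->
  Ival E X r w = (Lrep_fun r y)%:E.
Proof.
rewrite /Ival /Lrep_fun /Lrep_intvs.
elim: r => [|p r IH] /=; first by rewrite !big_nil.
rewrite all_cat map_cat flatten_cat => /andP[wp wr] /spec_dirac_on_cat[hp hr].
rewrite !big_cons IH // (sum_muA_dirac wp hp) -EFinM -EFinD mulr_sumr.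
by congr (_ + _)%:E; apply: eq_bigr => J _; case: ifP; rewrite ?mulr1 ?mulr0.
Qed.

Lemma exists_spec_dirac_on w (ts : seq R) (eta M : R) : (0 < eta)%R ->
  exists y : R, [/\ spec_dirac_on w y ts,
      X w \is a fin_num -> (`|y - fine (X w)| < eta)%R,
      X w = +oo -> (M < y)%R
    & X w = -oo -> (y < - M)%R].
Proof.
move=> e0; case hX : (X w) => [x||].
- case: (pselect (closure_gt x w)) => Gx.
    have [y [xy yx hy]] := exists_gap_right ts x e0.
    exists y; split => //; last by rewrite gtr0_norm ?subr_gt0 // ltrBlDl.
    move=> t ht; case: (leP y t) => yt.
      by apply: spec_eq1; apply: notin_closure_gt; rewrite hX lte_fin (lt_le_trans xy yt).
    apply: spec_eq0; apply: closure_gt_anti Gx; rewrite leNgt; apply/negP => xt.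
    by apply: (hy t ht); rewrite xt yt.
  exists x; split => //; last by rewrite subrr normr0.
  move=> t ht; case: (leP x t) => xt.
    by apply: spec_eq1 => Gt; apply: Gx; exact: closure_gt_anti Gt.
  by apply: spec_eq0; apply: closure_gtW; rewrite hX lte_fin.
- have [y [My h]] := exists_gt_seq ts M.
  exists y; split => // t ht.
  by rewrite spec_eq0 ?leNgt ?h //; apply: closure_gtW; rewrite hX ltry.
- have [y [My h]] := exists_lt_seq ts (- M)%R.
  exists y; split => // t ht.
  by rewrite spec_eq1 ?ltW ?h //; apply: notin_closure_gt; rewrite hX ltNyr.
Qed.

(* [~ closure_gt (fine (X w)) w] says that X <= X w on a neighbourhood of w. *)
Definition finite_local_max w := X w \is a fin_num /\ ~ closure_gt (fine (X w)) w.

Lemma finite_local_maxP (C : set K) c : open C -> C c ->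
  (forall t, C t -> X t \is a fin_num) ->
  (forall t, C t -> fine (X t) <= fine (X c))%R -> finite_local_max c.
Proof.
move=> oC Cc finC cmax; split => [|Gc]; first exact: finC.
have [t [/= ht Ct]] := Gc C (open_nbhs_nbhs (conj oC Cc)).
by move: ht; rewrite -(fineK (finC t Ct)) lte_fin ltNge cmax.
Qed.

Lemma finite_local_max_spec_dirac_on w ts : finite_local_max w ->
  spec_dirac_on w (fine (X w)) ts.
Proof.
case=> fw Gw t _; case: (leP (fine (X w)) t) => xt.
  by apply: spec_eq1 => Gt; apply: Gw; exact: closure_gt_anti Gt.
by apply: spec_eq0; apply: closure_gtW; rewrite -(fineK fw) lte_fin.
Qed.

(* X has a maximum on a compact clopen neighbourhood of a point where it is
   finite, chosen small enough for X to stay finite on it. *)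
Lemma dense_finite_local_max U w : open U -> U w ->
  exists2 w', U w' & finite_local_max w'.
Proof.
move=> oU Uw; have [w2 Uw2 f2] := dense_X_fin oU Uw.
set x2 := fine (X w2).
set W := U `&` [set w | X w < (x2 + 1)%:E] `&` [set w | (x2 - 1)%:E < X w].
have oW : open W := openI (openI oU (open_X_lt _)) (open_X_gt _).
have Ww2 : W w2.
  by split; [split|] => //=; rewrite -(fineK f2) lte_fin -/x2 ?ltrDl ?gtrDl ?oppr_lt0.
have [V [oV Vw2 VW]] := compact_hausdorff_shrink hK cK (open_nbhs_nbhs (conj oW Ww2)).
set C := closure V.
have cC : compact C by apply: (subclosed_compact _ cK) => //; exact: closed_closure.
have finC t : C t -> X t \is a fin_num.
  move=> /VW [[_ h1] h2] /=; apply/fin_numPlt.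
  by rewrite (lt_trans _ h2) ?ltNyr //= (lt_trans h1) ?ltry.
have cf : {within C, continuous (fine \o X)}.
  apply: continuous_in_subspaceT => t; rewrite inE => Ct.
  by have := @Xc t; rewrite /continuous_at -(fineK (finC t Ct)); exact: fine_cvg.
have [c Cc cmax] := compact_EVT_max (ex_intro _ w2 (subset_closure Vw2)) cC cf.
move: Cc; rewrite inE => Cc.
exists c; first by have [[]] := VW c Cc.
apply: (finite_local_maxP (@eK V oV) Cc finC) => t Ct.
by apply: cmax; rewrite inE.
Qed.

Section ComposeWithX.
Variables (f : R -> R) (M : R).
Hypotheses (fc : continuous f) (f0 : forall x, (0 <= f x)%R)
  (fM : forall x, (M < `|x|)%R -> f x = 0%R).

Definition fext (y : \bar R) : \bar R := if y is r%:E then (f r)%:E else 0.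

Definition fX w := fext (X w).

Lemma fext_continuous : continuous fext.
Proof.
case => [r||].
- move=> A /= hA; apply/nbhs_EFin.
  exact: fc ((nbhs_EFin A (f r)).1 hA).
- apply: (near_cst_continuous 0).
  apply: filterS (ereal_nbhs_pinfty_gt (num_real M)) => -[r||] //=.
  by rewrite lte_fin => Mr; rewrite fM // (lt_le_trans Mr (ler_norm r)).
- apply: (near_cst_continuous 0).
  apply: filterS (ereal_nbhs_ninfty_lt (num_real (- M)%R)) => -[r||] //=.
  rewrite lte_fin => Mr; rewrite fM // -normrN (lt_le_trans _ (ler_norm _)) //.
  by rewrite ltrNr.
Qed.

Lemma fX_continuous : continuous fX.
Proof. by move=> w; apply: continuous_comp; [exact: Xc | exact: fext_continuous]. Qed.

Lemma fX_ge0 w : 0 <= fX w.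
Proof. by rewrite /fX /fext; case: (X w) => [r||] //=; rewrite lee_fin. Qed.

Lemma fX_fin w : X w \is a fin_num -> fX w = (f (fine (X w)))%:E.
Proof. by rewrite /fX /fext; case: (X w). Qed.

Lemma E_fX : E fX.
Proof.
have [B hB] := continuous_bounded_support_ub fc fM.
apply: (E_ideal (E_scale B E1)).
  split; first exact: fX_continuous.
  have -> : [set w | fX w = +oo \/ fX w = -oo] = set0.
    by apply/seteqP; split => w //=; rewrite /fX /fext; case: (X w) => [r||] //= [].
  exact: nowhere_dense0.
move=> w; rewrite mule1 /fX /fext; case: (X w) => [r||] //=; rewrite !lee_fin ?normr0 //.
by rewrite ger0_norm ?f0 //; exact: le_trans (hB r) (ler_norm B).
Qed.

Lemma exists_spec_dirac_on_f_le w ts e : (0 < e)%R ->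
  exists y, spec_dirac_on w y ts /\ (f y)%:E <= fX w + e%:E.
Proof.
move=> e0; rewrite /fX /fext; case hX: (X w) => [x||].
- have [d d0 hd] := continuous_dist_lt x fc e0.
  have [y [ok hy _ _]] := exists_spec_dirac_on w ts M d0.
  exists y; split => //; rewrite -EFinD lee_fin.
  move: hy; rewrite hX => /(_ isT) /hd; rewrite ltr_norml => /andP[_]; lra.
- have [y [ok _ hy _]] := exists_spec_dirac_on w ts M ltr01.
  exists y; split => //; rewrite add0e lee_fin fM ?ltW //.
  exact: lt_le_trans (hy hX) (ler_norm y).
- have [y [ok _ _ hy]] := exists_spec_dirac_on w ts M ltr01.
  exists y; split => //; rewrite add0e lee_fin fM ?ltW //.
  by rewrite -normrN (lt_le_trans _ (ler_norm _)) // ltrNr hy.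
Qed.

Lemma Ival_le_fX (r : Lrep R) w : all (@intv_wf R) (Lrep_intvs r) ->
  (forall y, Lrep_fun r y <= f y)%R -> Ival E X r w <= fX w.
Proof.
move=> wf le_f; apply/lee_addgt0Pr => e e0.
have [y [ok hy]] := exists_spec_dirac_on_f_le w (flatten (map intv_ends (Lrep_intvs r))) e0.
by rewrite (Ival_dirac wf ok); apply: le_trans hy; rewrite lee_fin.
Qed.

Lemma fX_le_ub (r : nat -> Lrep R) (v : K -> \bar R) :
  (forall n, all (@intv_wf R) (Lrep_intvs (r n))) ->
  incr_to (fun n => Lrep_fun (r n)) f -> continuous v ->
  (forall n w, Ival E X (r n) w <= v w) -> forall w, fX w <= v w.
Proof.
move=> wf inc vc hv; apply: le_of_dense_le => //; first exact: fX_continuous.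
move=> U w oU Uw; have [w' Uw' lmax] := dense_finite_local_max oU Uw.
exists w' => //; set x := fine (X w').
have hvn n : (Lrep_fun (r n) x)%:E <= v w'.
  by rewrite -(Ival_dirac (wf n) (finite_local_max_spec_dirac_on lmax)).
rewrite fX_fin ?lmax.1 // -/x; case hv' : (v w') => [b||]; last 2 first.
- exact: leey.
- by have := hvn 0%N; rewrite hv' leNgt ltNyr.
rewrite lee_fin; apply: (cvg_le_ub (inc x).2) => n.
by have := hvn n; rewrite hv' lee_fin.
Qed.

Lemma is_lub_in_fX (r : nat -> Lrep R) : (forall n, Lrep_wf (r n)) ->
  incr_to (fun n => Lrep_fun (r n)) f ->
  is_lub_in (Esup E) (range (fun n => Ival E X (r n))) fX.
Proof.
move=> wf inc; have wfn n : all (@intv_wf R) (Lrep_intvs (r n)) by case: (wf n).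
split.
- by split; [exact: fX_continuous | exists fX; split => //; exact: E_fX].
- move=> _ [n _ <-] w; apply: Ival_le_fX => // y.
  exact: nondecreasing_le_cvg (inc y).1 (inc y).2 n.
- by move=> v [vc _] hv; apply: fX_le_ub => // n w; apply: hv; exists n.
Qed.

End ComposeWithX.

End SpectralSystem.

Theorem mainTheorem5 (R : realType) (K : topologicalType)
    (E : set (K -> \bar R)) (X : K -> \bar R) (f : R -> R) :
  compact [set: K] -> hausdorff_space K -> extremally_disconnected K ->
  order_dense_ideal_with_unit E ->
  E X ->
  continuous f -> (forall x, 0 <= f x) ->
  (exists M : R, forall x, M < `|x| -> f x = 0) ->
  (exists r : nat -> Lrep R,
      (forall n, Lrep_wf (r n)) /\ incr_to (fun n => Lrep_fun (r n)) f)
  /\ (exists h : K -> \bar R,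
      [/\ E h, (forall w, (0 <= h w)%E),
          (forall w, X w \is a fin_num -> h w = (f (fine (X w)))%:E)
        & (forall r : nat -> Lrep R,
             (forall n, Lrep_wf (r n)) -> incr_to (fun n => Lrep_fun (r n)) f ->
             is_lub_in (Esup E) (range (fun n => Ival E X (r n))) h)]).
Proof.
move=> cK hK eK hE EX fc f0 [M fM]; split.
  by exists (@dyadic_lower R f); split; [exact: dyadic_lower_wf | exact: dyadic_lower_incr_to].
exists (fX X f); split.
- exact: (E_fX hE EX fc f0 fM).
- exact: fX_ge0.
- exact: fX_fin.
- exact: (is_lub_in_fX hK cK eK hE EX fc f0 fM).
Qed.
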